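(* Let $X$ be a fixed finite set, let $p \in (0,1)$ and $\delta_B \in (0,1)$. For a finite set $Y$, let $\mathcal M_Y(Y) = |X \cap Y_{\mathrm{sub}}|$, where $Y_{\mathrm{sub}} \subseteq Y$ includes each element of $Y$ independently with probability $p$. Set $$L = \frac{\left(\sqrt{\tfrac12\log\tfrac{2}{\delta_B}} + \sqrt{\tfrac12\log\tfrac{2}{\delta_B} + 16(1-p)\log\tfrac{4}{\delta_B}}\right)^2}{16(1-p)^2}.$$ If $|I| > L$, where $I = X\cap Y$, then $\mathcal M_Y$ provides $(\epsilon_B, \delta_B)$-differential privacy for $Y$, i.e. for every $Y'$ neighboring $Y$ and every set $W$ of outputs, $\Pr[\mathcal M_Y(Y)\in W] \le e^{\epsilon_B}\Pr[\mathcal M_Y(Y')\in W] + \delta_B$, where $$\epsilon_B = \frac{2\sqrt{t\log\frac{4}{\delta_B}} + 1}{t - \sqrt{t\log\frac{4}{\delta_B}}}, \qquad t = (1-p)|I| - \sqrt{\frac{|I|}{8}\log\frac{2}{\delta_B}}.$$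
   Context: $\log$ is the natural logarithm. Neighboring sets are in the bounded sense: $Y'$ is obtained from $Y$ by replacing exactly one element by another element (so $|Y'|=|Y|$); the set $X$ is held fixed. *)

From HB Require Import structures.
From mathcomp Require Import all_boot all_order all_algebra.
From mathcomp Require Import all_classical all_reals.
From mathcomp Require Import all_analysis.
Set Implicit Arguments. Unset Strict Implicit. Unset Printing Implicit Defensive.
Import Order.TTheory GRing.Theory Num.Theory.
Local Open Scope ring_scope.

Section Defs.
Variables (R : realType) (T : finType).

(* Pr[ M_Y(Y) \in W ] where M_Y(Y) = |X \cap Y_sub| and Y_sub is the random
   subset of Y containing each element of Y independently with probability p:
   sum over all subsets S of Y of Pr[Y_sub = S] * [ |X \cap S| \in W ]. *)
Definition mech_prob (p : R) (X Y : {set T}) (W : pred nat) : R :=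
  \sum_(S : {set T} | S \subset Y)
     p ^+ #|S| * (1 - p) ^+ (#|Y| - #|S|) * (W #|X :&: S|)%:R.

(* Bounded neighbouring: Y' is Y with exactly one element y replaced by
   another element y' (not already in Y), so |Y'| = |Y|. *)
Definition neighbor (Y Y' : {set T}) : Prop :=
  exists y y', [/\ y \in Y, y' \notin Y & Y' = y' |: (Y :\ y)].
End Defs.

Definition bound_L (R : realType) (p dB : R) : R :=
  (Num.sqrt (2^-1 * ln (2 / dB)) +
   Num.sqrt (2^-1 * ln (2 / dB) + 16 * (1 - p) * ln (4 / dB))) ^+ 2
  / (16 * (1 - p) ^+ 2).

Definition t_param (R : realType) (p dB : R) (nI : nat) : R :=
  (1 - p) * nI%:R - Num.sqrt (nI%:R / 8 * ln (2 / dB)).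

Definition eps_B (R : realType) (p dB : R) (nI : nat) : R :=
  let t := t_param p dB nI in
  (2 * Num.sqrt (t * ln (4 / dB)) + 1) / (t - Num.sqrt (t * ln (4 / dB))).

From HB Require Import structures.
From mathcomp Require Import all_boot all_order all_algebra.
From mathcomp Require Import all_classical all_reals.
From mathcomp Require Import all_analysis.
From mathcomp Require Import ring lra.
Import Order.TTheory GRing.Theory Num.Theory.
Local Open Scope ring_scope.
Set Implicit Arguments. Unset Strict Implicit. Unset Printing Implicit Defensive.

(* The output |X ∩ Y_sub| is Bin(n, p)-distributed with n = |X ∩ Y|, and replacing
   one element of Y changes n by at most one.  The likelihood ratio of Bin(n+1, p)
   to Bin(n, p) at k is (n+1)(1-p)/(n+1-k), a function of the number of failures
   alone, so the outputs where the privacy loss exceeds ε lie in a tail of the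
   failure count, which is Bin(n, 1-p).  With ε as in the statement, a Chernoff
   bound makes that tail at most δ as soon as ln(4/δ) < t <= n(1-p), and |I| > L is
   what guarantees ln(4/δ) < t. *)

Section BinomialDistribution.
Variables (R : comPzRingType) (p : R).

Definition binom_pmf n k : R := 'C(n, k)%:R * p ^+ k * (1 - p) ^+ (n - k).

Definition binom_expect n (F : nat -> R) : R := \sum_(k < n.+1) binom_pmf n k * F k.

Lemma binom_pmf_small n k : (n < k)%N -> binom_pmf n k = 0.
Proof. by move=> ltnk; rewrite /binom_pmf bin_small // !mul0r. Qed.

Lemma binom_expect_widen n N F : (n < N)%N ->
  binom_expect n F = \sum_(k < N) binom_pmf n k * F k.
Proof.
move=> ltnN; rewrite /binom_expect (big_ord_widen N (fun k => binom_pmf n k * F k)) //.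
rewrite [RHS](bigID (fun k : 'I_N => (k < n.+1)%N)) /= [X in _ + X]big1 ?addr0 // => k.
by rewrite -leqNgt => /binom_pmf_small ->; rewrite mul0r.
Qed.

Lemma binom_expectS n F :
  binom_expect n.+1 F = (1 - p) * binom_expect n F + p * binom_expect n (F \o succn).
Proof.
rewrite /binom_expect /binom_pmf big_ord_recl /=.
under eq_bigr do rewrite binS natrD !mulrDl.
rewrite big_split /= addrA; congr (_ + _).
  rewrite big_ord_recr /= (bin_small (ltnSn n)) !mul0r addr0.
  rewrite [in RHS]big_ord_recl mulrDr mulr_sumr; congr (_ + _).
    by rewrite !bin0 !subn0 exprS; ring.
  apply: eq_bigr => i _; rewrite /bump /= !add1n subSS.
  by rewrite -(subnSK (ltn_ord i)) (exprS (1 - p)); ring.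
by rewrite mulr_sumr; apply: eq_bigr => i _; rewrite /bump /= !add1n subSS exprS; ring.
Qed.

Lemma binom_pmfS n k : (k <= n.+1)%N ->
  (n.+1 - k)%:R * binom_pmf n.+1 k = n.+1%:R * (1 - p) * binom_pmf n k.
Proof.
rewrite leq_eqVlt ltnS => /predU1P[-> | lekn].
  by rewrite subnn (binom_pmf_small (ltnSn n)) mul0r mulr0.
have /(congr1 (fun i => i%:R : R)) := mul_bin_down n.+1 k.
rewrite !natrM /binom_pmf subSn // exprS /= => bin_down.
by rewrite !mulrA -bin_down; ring.
Qed.

End BinomialDistribution.

Section Subsets.
Variable T : finType.

Lemma big_subsetU1 (V : nmodType) (y : T) (Y : {set T}) (h : {set T} -> V) : y \notin Y ->
  \sum_(S : {set T} | S \subset y |: Y) h S =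
  \sum_(S : {set T} | S \subset Y) h S + \sum_(S : {set T} | S \subset Y) h (y |: S).
Proof.
move=> yY.
have yNS (S : {set T}) : S \subset Y -> y \notin S.
  by move=> sSY; apply: contraNN yY => /(fintype.subsetP sSY).
rewrite (bigID (fun S : {set T} => y \in S)) /= addrC; congr (_ + _).
  apply: eq_bigl => S; apply/andP/idP => [[sSyY yS] | sSY].
    by rewrite -(finset.setU1K yY) finset.subsetD1 sSyY.
  by rewrite (fintype.subset_trans sSY) ?finset.subsetUr ?yNS.
rewrite (reindex_onto (fun S => y |: S) (fun S => S :\ y)) /=; last first.
  by move=> S /andP[_ yS]; rewrite finset.setD1K.
apply: eq_bigl => S; apply/andP/idP => [[/andP[sSyY _] /eqP <-] | sSY].
  by rewrite -(finset.setU1K yY) finset.setSD.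
by rewrite setU11 finset.setUS // finset.setU1K ?yNS ?eqxx.
Qed.

Lemma cardIU1 (X Z : {set T}) (y : T) : y \notin Z ->
  #|X :&: (y |: Z)| = ((y \in X) + #|X :&: Z|)%N.
Proof.
move=> yNZ; have [yX | yNX] := boolP (y \in X).
  have -> : X :&: (y |: Z) = y |: (X :&: Z).
    by apply/finset.setP => x; rewrite !inE; case: eqP => // ->; rewrite yX.
  by rewrite finset.cardsU1 inE (negbTE yNZ) andbF.
suff -> : X :&: (y |: Z) = X :&: Z by [].
by apply/finset.setP => x; rewrite !inE; case: eqP => // ->; rewrite (negbTE yNX).
Qed.

Lemma sum_subset_binom (R : comPzRingType) (p : R) (X Y : {set T}) (F : nat -> R) :
  \sum_(S : {set T} | S \subset Y) p ^+ #|S| * (1 - p) ^+ (#|Y| - #|S|) * F #|X :&: S|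
  = binom_expect p #|X :&: Y| F.
Proof.
have [n] := ubnP #|Y|; elim: n Y F => // n IH Y F.
have [-> _ | [y yY] ltYn] := finset.set_0Vmem Y.
  rewrite (big_pred1 finset.set0) => [|S]; last exact: finset.subset0.
  rewrite finset.setI0 !finset.cards0 /binom_expect big_ord_recl big_ord0 /binom_pmf.
  by rewrite bin0 !expr0 !mul1r addr0.
set Y0 := Y :\ y; have yNY0 : y \notin Y0 by rewrite !inE eqxx.
have ltY0n : (#|Y0| < n)%N.
  by move: ltYn; rewrite (finset.cardsD1 y Y) yY add1n ltnS.
have yNS (S : {set T}) : S \subset Y0 -> y \notin S.
  by move=> sSY0; apply: contraNN yNY0 => /(fintype.subsetP sSY0).
rewrite -(finset.setD1K yY) -/Y0 big_subsetU1 // finset.cardsU1 yNY0 add1n cardIU1 //.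
transitivity ((1 - p) * binom_expect p #|X :&: Y0| F +
  p * binom_expect p #|X :&: Y0| (fun k => F ((y \in X) + k)%N)).
  rewrite -!IH // !mulr_sumr; congr (_ + _); apply: eq_bigr => S sSY0.
    by rewrite subSn ?fintype.subset_leq_card // exprS; ring.
  by rewrite cardIU1 ?yNS // finset.cardsU1 yNS // add1n subSS exprS; ring.
by case: (y \in X); rewrite ?binom_expectS // -mulrDl subrK mul1r.
Qed.

End Subsets.

Lemma mech_probE (R : realType) (T : finType) (p : R) (X Y : {set T}) W :
  mech_prob p X Y W = binom_expect p #|X :&: Y| (fun k => (W k)%:R).
Proof. exact: sum_subset_binom. Qed.

Section BinomialTails.
Variables (R : realType) (p : R).

Lemma binom_mgf n l : \sum_(k < n.+1) binom_pmf p n k * expR (l * (n - k)%:R) =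
  (p + (1 - p) * expR l) ^+ n.
Proof.
rewrite addrC exprDn; apply: eq_bigr => k _.
by rewrite /binom_pmf expRM_natr exprMn; ring.
Qed.

Hypotheses (p_ge0 : 0 <= p) (p_le1 : p <= 1).

Lemma binom_pmf_ge0 n k : 0 <= binom_pmf p n k.
Proof. by rewrite /binom_pmf !mulr_ge0 ?exprn_ge0 ?ler0n ?subr_ge0. Qed.

Lemma binom_expect_ge0 n F : (forall k, 0 <= F k) -> 0 <= binom_expect p n F.
Proof. by move=> F_ge0; apply: sumr_ge0 => k _; rewrite mulr_ge0 ?binom_pmf_ge0. Qed.

Lemma binom_mgf_le n l :
  (p + (1 - p) * expR l) ^+ n <= expR (n%:R * (1 - p) * (expR l - 1)).
Proof.
rewrite -mulrA expRM_natl lerXn2r ?nnegrE ?expR_ge0 //.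
  by rewrite addr_ge0 // mulr_ge0 ?subr_ge0 ?expR_ge0.
have -> : p + (1 - p) * expR l = 1 + (1 - p) * (expR l - 1) by ring.
exact: expR_ge1Dx.
Qed.

Lemma binom_chernoff n (A : pred nat) l a :
  (forall k, (k <= n)%N -> A k -> a < l * (n - k)%:R) ->
  binom_expect p n (fun k => (A k)%:R) <= expR (n%:R * (1 - p) * (expR l - 1) - a).
Proof.
move=> tailA.
apply: le_trans (_ : binom_expect p n (fun k => expR (l * (n - k)%:R - a)) <= _).
  apply: ler_sum => k _; rewrite ler_wpM2l ?binom_pmf_ge0 //.
  have [Ak | _] := boolP (A k); last exact: expR_ge0.
  by rewrite ltW // expR_gt1 subr_gt0 tailA // -ltnS.
rewrite /binom_expect; under eq_bigr do rewrite expRD mulrA.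
by rewrite -big_distrl /= binom_mgf expRD ler_wpM2r ?expR_ge0 ?binom_mgf_le.
Qed.

Definition binom_excess e n m : pred nat :=
  fun k => expR e * binom_pmf p m k < binom_pmf p n k.

Lemma binom_expect_le_excess e n m F : (forall k, 0 <= F k <= 1) ->
  binom_expect p n F <=
    expR e * binom_expect p m F + binom_expect p n (fun k => (binom_excess e n m k)%:R).
Proof.
move=> F01; set N := (maxn n m).+1.
rewrite !(@binom_expect_widen _ p _ N) ?ltnS ?leq_maxl ?leq_maxr //.
rewrite mulr_sumr -big_split /=; apply: ler_sum => k _.
have /andP[F_ge0 F_le1] := F01 k.
have := binom_pmf_ge0 m k; have := expR_gt0 e.
by rewrite /binom_excess; case: (ltP (expR e * binom_pmf p m k)) => /=; nra.
Qed.

Lemma failures_gt_of_pmf_gt n k e : (k <= n)%N ->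
  expR e * binom_pmf p n.+1 k < binom_pmf p n k ->
  n.+1%:R * (1 - p) * expR e - 1 < (n - k)%:R.
Proof.
move=> lekn excess.
suff : n.+1%:R * (1 - p) * expR e < (n.+1 - k)%:R.
  by rewrite subSn // -addn1 natrD; lra.
have pmf_gt0 : 0 < binom_pmf p n k.
  by apply: le_lt_trans excess; rewrite mulr_ge0 ?expR_ge0 ?binom_pmf_ge0.
rewrite -(ltr_pM2r pmf_gt0) mulrAC -binom_pmfS ?leqW // -mulrA [_ * expR e]mulrC.
by rewrite ltr_pM2l // ltr0n subn_gt0 ltnS.
Qed.

Hypothesis p_lt1 : p < 1.

Lemma failures_lt_of_pmfS_gt n k e : (k <= n.+1)%N ->
  expR e * binom_pmf p n k < binom_pmf p n.+1 k ->
  (n.+1 - k)%:R < n.+1%:R * (1 - p) * expR (- e).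
Proof.
move=> lekn excess.
have pmf_gt0 : 0 < binom_pmf p n.+1 k.
  by apply: le_lt_trans excess; rewrite mulr_ge0 ?expR_ge0 ?binom_pmf_ge0.
rewrite -(ltr_pM2r pmf_gt0) binom_pmfS // -[X in _ < X]mulrA ltr_pM2l; last first.
  by rewrite mulr_gt0 ?ltr0Sn ?subr_gt0.
by rewrite -(ltr_pM2l (expR_gt0 e)) mulrA -expRD subrr expR0 mul1r.
Qed.

End BinomialTails.

Section ExpBounds.
Variable R : realType.

Lemma expR1_le4 : expR 1 <= 4 :> R.
Proof.
have half_le : 1 - 2^-1 <= expR (- 2^-1) :> R := expR_ge1Dx _.
have -> : expR 1 = expR (2^-1) ^+ 2 :> R by rewrite -expRM_natl; congr expR; field.
have : expR (2^-1) * expR (- 2^-1) = 1 :> R := expRxMexpNx_1 _.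
have := expR_gt0 (2^-1 : R); nra.
Qed.

Lemma sqr_le_expR_tail (e : R) : 0 <= e ->
  e ^+ 2 <= (1 - (1 + e) * expR (- e)) * (e + 2) ^+ 2.
Proof.
move=> e_ge0; set y := expR (e / 2).
have y_ge : 1 + e / 2 <= y := expR_ge1Dx _.
have y2 : y ^+ 2 * expR (- e) = 1.
  by rewrite -expRM_natl -expRD -[RHS]expR0; congr expR; field.
have : (e + 2) ^+ 2 <= 4 * y ^+ 2 by nra.
rewrite -subr_ge0 => gap.
have : 0 <= (1 + e) * expR (- e) * (4 * y ^+ 2 - (e + 2) ^+ 2).
  by rewrite !mulr_ge0 ?expR_ge0 // addr_ge0.
nra.
Qed.

Lemma sqr_quarter_le_expR (e : R) : 0 <= e -> e ^+ 2 / 4 <= 1 + expR e * (e - 1).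
Proof.
move=> e_ge0; have [e_ge1 | e_lt1] := leP 1 e.
  by have := expR_ge1Dx e; nra.
set y := expR (e / 2).
have y_ge : 1 - e / 2 <= expR (- (e / 2)) := expR_ge1Dx _.
have y2 : expR e = y ^+ 2 by rewrite -expRM_natl; congr expR; field.
have yN : y * expR (- (e / 2)) = 1 := expRxMexpNx_1 _.
have y_gt0 : 0 < y := expR_gt0 _.
have y_half : 0 <= y * (1 - e / 2) <= 1 by apply/andP; split; nra.
have y2_half : y ^+ 2 * (1 - e / 2) ^+ 2 <= 1 by nra.
have : 1 - e <= (1 - e / 2) ^+ 2 * (1 - e ^+ 2 / 4) by nra.
rewrite y2; nra.
Qed.

End ExpBounds.

(* [eps_B p dB n] is [eps_of (t_param p dB n) (ln (4 / dB))] by conversion. *)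
Definition eps_of (R : realType) (t b : R) : R :=
  (2 * Num.sqrt (t * b) + 1) / (t - Num.sqrt (t * b)).

Section PrivacyLoss.
Variables (R : realType) (t b : R).
Hypotheses (b_ge1 : 1 <= b) (b_lt_t : b < t).
(* [lra] and [nra] ignore section hypotheses, hence the occasional [move: b_ge1 b_lt_t]. *)

Local Notation s := (Num.sqrt (t * b)).
Local Notation e := (eps_of t b).

Lemma sqrt_tb_sqr : s ^+ 2 = t * b.
Proof. by rewrite sqr_sqrtr // mulr_ge0 //; move: b_ge1 b_lt_t; lra. Qed.

Lemma sqrt_tb_lt : s < t.
Proof.
have t_gt0 : 0 < t by move: b_ge1 b_lt_t; lra.
by rewrite -(@ltr_pXn2r _ 2) ?nnegrE ?sqrtr_ge0 ?sqrt_tb_sqr ?expr2 ?ltr_pM2l ?ltW.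
Qed.

Lemma eps_ofE : e * (t - s) = 2 * s + 1.
Proof. by rewrite /eps_of mulfVK // subr_eq0 gt_eqF ?sqrt_tb_lt. Qed.

Lemma eps_of_gt0 : 0 < e.
Proof. by rewrite divr_gt0 ?subr_gt0 ?sqrt_tb_lt // ltr_wpDl ?mulr_ge0 ?sqrtr_ge0. Qed.

Lemma lower_tail_exponent mu : t <= mu -> b <= mu * (1 - (1 + e) * expR (- e)).
Proof.
move=> le_t_mu; have e_gt0 := eps_of_gt0; have s_ge0 := sqrtr_ge0 (t * b).
have t_gt0 : 0 < t by move: b_ge1 b_lt_t; lra.
set f := 1 - (1 + e) * expR (- e).
have tail : e ^+ 2 <= f * (e + 2) ^+ 2 by apply: sqr_le_expR_tail; exact: ltW.
have e2_gt0 : 0 < (e + 2) ^+ 2 by rewrite exprn_gt0 //; lra.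
have se_le_te : s * (e + 2) <= t * e by have := eps_ofE; nra.
have b_le : b * (e + 2) ^+ 2 <= t * e ^+ 2.
  have se_ge0 : 0 <= s * (e + 2) by rewrite mulr_ge0 // addr_ge0 // ltW.
  have : (s * (e + 2)) ^+ 2 <= (t * e) ^+ 2.
    by apply: lerXn2r; rewrite ?nnegrE // (le_trans se_ge0 se_le_te).
  rewrite !exprMn sqrt_tb_sqr => sq_le.
  by rewrite -(ler_pM2l t_gt0); nra.
have : b <= t * f by rewrite -(ler_pM2r e2_gt0) -mulrA; nra.
have f_ge0 : 0 <= f by rewrite -(pmulr_lge0 _ e2_gt0); nra.
nra.
Qed.

Lemma eps_of_quadratic_ge : b - 1 <= t * (e ^+ 2 / 4) - e.
Proof.
have s_ge0 := sqrtr_ge0 (t * b); have s2 := sqrt_tb_sqr; have s_lt_t := sqrt_tb_lt.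
have eD := eps_ofE; set r := Num.sqrt (t * b) in s_ge0 s2 s_lt_t eD.
have r_ge1 : 1 <= r by move: b_ge1 b_lt_t; nra.
set D := t - r in eD *; have D_gt0 : 0 < D by rewrite subr_gt0.
have D_le : D <= r ^+ 2 - r by rewrite /D s2; move: b_ge1 b_lt_t; nra.
(* Clearing the denominator 4 t D^2 leaves a polynomial in r and D whose only
   negative term, -3 D^2, is absorbed by the linear one because D <= r^2 - r. *)
have poly_ge0 : 0 <= r ^+ 2 * (2 * r + 1) ^+ 2
    + 2 * r * (2 * r + 1) * (2 * r - 1) * D - 3 * D ^+ 2 + 4 * D ^+ 3.
  have : 6 <= 2 * r * (2 * r + 1) * (2 * r - 1) by nra.
  nra.
have poly_eq : 4 * t * D ^+ 2 * (t * (e ^+ 2 / 4) - e - b + 1) = r ^+ 2 * (2 * r + 1) ^+ 2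
    + 2 * r * (2 * r + 1) * (2 * r - 1) * D - 3 * D ^+ 2 + 4 * D ^+ 3.
  transitivity (t ^+ 2 * (e * D) ^+ 2 - 4 * t * D * (e * D) - 4 * (t * b) * D ^+ 2
      + 4 * t * D ^+ 2); first by field.
  by rewrite eD -s2 /D; ring.
rewrite -poly_eq pmulr_rge0 in poly_ge0; first by lra.
by rewrite !mulr_gt0 ?exprn_gt0 //; move: b_ge1 b_lt_t; lra.
Qed.

Lemma upper_tail_exponent mu q : t <= mu -> 0 <= q ->
  mu * (expR e - 1) - e * (mu * expR e + q * expR e - 1) <= 1 - b.
Proof.
move=> le_t_mu q_ge0; have e_gt0 := eps_of_gt0.
have mu_ge0 : 0 <= mu by move: b_ge1 b_lt_t; lra.
have quarter : 0 <= 1 + expR e * (e - 1) - e ^+ 2 / 4.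
  by rewrite subr_ge0 sqr_quarter_le_expR // ltW.
have := mulr_ge0 mu_ge0 quarter.
have := mulr_ge0 (_ : 0 <= mu - t) (sqr_ge0 e); rewrite subr_ge0 => /(_ le_t_mu).
have := mulr_ge0 (mulr_ge0 (ltW e_gt0) q_ge0) (expR_ge0 e).
have := eps_of_quadratic_ge.
nra.
Qed.

Variable p : R.
Hypotheses (p_ge0 : 0 <= p) (p_lt1 : p < 1).

Lemma binom_excess_pred_le n : t <= n.+1%:R * (1 - p) ->
  binom_expect p n.+1 (fun k => (binom_excess p e n.+1 n k)%:R) <= expR (- b).
Proof.
set mu := n.+1%:R * (1 - p) => le_t_mu.
apply: le_trans (binom_chernoff p_ge0 (ltW p_lt1)
  (l := - e) (a := - e * (mu * expR (- e))) _) _.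
  move=> k lekn /(failures_lt_of_pmfS_gt p_ge0 (ltW p_lt1) p_lt1 lekn) few_failures.
  by rewrite !mulNr ltrN2 ltr_pM2l ?eps_of_gt0.
rewrite ler_expR -/mu.
have -> : mu * (expR (- e) - 1) - - e * (mu * expR (- e)) =
  - (mu * (1 - (1 + e) * expR (- e))) by ring.
by rewrite lerN2 lower_tail_exponent.
Qed.

Lemma binom_excess_succ_le n : t <= n%:R * (1 - p) ->
  binom_expect p n (fun k => (binom_excess p e n n.+1 k)%:R) <= expR (1 - b).
Proof.
set mu := n%:R * (1 - p) => le_t_mu.
apply: le_trans (binom_chernoff p_ge0 (ltW p_lt1)
  (l := e) (a := e * (n.+1%:R * (1 - p) * expR e - 1)) _) _.
  move=> k lekn /(failures_gt_of_pmf_gt p_ge0 (ltW p_lt1) lekn) many_failures.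
  by rewrite ltr_pM2l ?eps_of_gt0.
rewrite ler_expR -/mu.
have -> : n.+1%:R * (1 - p) * expR e - 1 = mu * expR e + (1 - p) * expR e - 1.
  by rewrite -natr1 /mu; ring.
by apply: upper_tail_exponent; rewrite // subr_ge0 ltW.
Qed.

Lemma binom_dp n m F : (forall k, 0 <= F k <= 1) -> t <= n%:R * (1 - p) ->
  [\/ m = n, m.+1 = n | m = n.+1] ->
  binom_expect p n F <= expR e * binom_expect p m F + expR (1 - b).
Proof.
have split_excess := binom_expect_le_excess p_ge0 (ltW p_lt1) e.
move=> F01 le_t_mu [-> | eq_n | ->].
- have E_ge0 : 0 <= binom_expect p n F.
    by apply: (binom_expect_ge0 p_ge0 (ltW p_lt1)) => k; case/andP: (F01 k).
  have : 1 <= expR e by rewrite -expR0 ler_expR ltW ?eps_of_gt0.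
  have := expR_gt0 (1 - b); nra.
- subst n; apply: le_trans (split_excess _ m _ F01) _; rewrite lerD2l.
  by apply: le_trans (binom_excess_pred_le le_t_mu) _; rewrite ler_expR lerDr.
- apply: le_trans (split_excess _ n.+1 _ F01) _; rewrite lerD2l.
  exact: binom_excess_succ_le.
Qed.

End PrivacyLoss.

Section Threshold.
Variable R : realType.
Implicit Types (p dB : R) (n : nat).

Lemma ln_four_div_ge1 dB : 0 < dB <= 1 -> 1 <= ln (4 / dB).
Proof.
case/andP=> dB_gt0 dB_le1.
rewrite -[leLHS](expRK 1) ler_ln ?posrE ?expR_gt0 ?divr_gt0 //.
by rewrite (le_trans (expR1_le4 R)) // ler_pdivlMr // ler_piMr.
Qed.

Lemma expR_1_sub_ln_four_div dB : 0 < dB -> expR (1 - ln (4 / dB)) <= dB.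
Proof.
move=> dB_gt0; rewrite expRD expRN lnK ?posrE ?divr_gt0 // invf_div.
by rewrite mulrCA ler_piMr ?(ltW dB_gt0) // ler_pdivrMr // mul1r expR1_le4.
Qed.

Lemma t_param_le p dB n : t_param p dB n <= n%:R * (1 - p).
Proof. by rewrite /t_param mulrC lerBlDr lerDl sqrtr_ge0. Qed.

Lemma ln_four_div_lt_t_param p dB n : 0 < p < 1 -> 0 < dB < 1 ->
  bound_L p dB < n%:R -> ln (4 / dB) < t_param p dB n.
Proof.
case/andP=> p_gt0 p_lt1 /andP[dB_gt0 dB_lt1].
set b := ln (4 / dB); set q := 1 - p; have q_gt0 : 0 < q by rewrite subr_gt0.
have b_ge0 : 0 <= b by rewrite (le_trans ler01) ?ln_four_div_ge1 ?dB_gt0 ?ltW.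
have ln2_ge0 : 0 <= ln (2 / dB) by rewrite ln_ge0 // ler_pdivlMr // mul1r; lra.
set A := 2^-1 * ln (2 / dB); have A_ge0 : 0 <= A by rewrite mulr_ge0 ?invr_ge0.
set w := Num.sqrt A; have w_ge0 : 0 <= w := sqrtr_ge0 _.
have w2 : w ^+ 2 = A by rewrite sqr_sqrtr.
set z := Num.sqrt (A + 16 * q * b); have z_ge0 : 0 <= z := sqrtr_ge0 _.
have z2 : z ^+ 2 = A + 16 * q * b by rewrite sqr_sqrtr // addr_ge0 // !mulr_ge0 // ltW.
set u := Num.sqrt (n%:R : R); have u_ge0 : 0 <= u := sqrtr_ge0 _.
have u2 : u ^+ 2 = n%:R by rewrite sqr_sqrtr.
rewrite /bound_L -/b -/q -/A -/w -/z ltr_pdivrMr ?mulr_gt0 ?exprn_gt0 // => gt_L.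
have wz_lt : w + z < 4 * q * u.
  have : 0 <= 4 * q * u by rewrite !mulr_ge0 // ltW.
  rewrite -u2 in gt_L; nra.
have b_lt : b < q * u ^+ 2 - u * w / 2.
  have : z < 4 * q * u - w by lra.
  nra.
rewrite /t_param -/q; suff -> : Num.sqrt (n%:R / 8 * ln (2 / dB)) = u * w / 2 by rewrite -u2.
apply/eqP; rewrite -(@eqrXn2 _ 2) ?sqr_sqrtr ?divr_ge0 ?mulr_ge0 //.
by rewrite expr_div_n exprMn u2 w2 /A; apply/eqP; field.
Qed.

End Threshold.

Lemma neighbor_cardI (T : finType) (X Y Y' : {set T}) : neighbor Y Y' ->
  [\/ #|X :&: Y'| = #|X :&: Y|, #|X :&: Y'|.+1 = #|X :&: Y|
    | #|X :&: Y'| = #|X :&: Y|.+1].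
Proof.
case=> y [y' [yY y'NY ->]]; set Y0 := Y :\ y.
have yNY0 : y \notin Y0 by rewrite !inE eqxx.
have y'NY0 : y' \notin Y0 by rewrite !inE negb_and y'NY orbT.
rewrite -[in #|X :&: Y|](finset.setD1K yY) -/Y0 !cardIU1 //.
by case: (y \in X); case: (y' \in X); rewrite ?add0n ?add1n;
  [apply: Or31 | apply: Or32 | apply: Or33 | apply: Or31].
Qed.

Theorem theorem2 (R : realType) (T : finType) (X Y : {set T}) (p dB : R) :
  0 < p < 1 -> 0 < dB < 1 ->
  bound_L p dB < #|X :&: Y|%:R ->
  forall (Y' : {set T}) (W : pred nat), neighbor Y Y' ->
    mech_prob p X Y W <=
      expR (eps_B p dB #|X :&: Y|) * mech_prob p X Y' W + dB.
Proof.
move=> p01 dB01 gt_L Y' W /(neighbor_cardI X) card_Y'.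
have /andP[p_gt0 p_lt1] := p01; have /andP[dB_gt0 dB_lt1] := dB01.
have b_ge1 : 1 <= ln (4 / dB) by rewrite ln_four_div_ge1 ?dB_gt0 ?ltW.
have b_lt_t := ln_four_div_lt_t_param p01 dB01 gt_L.
have W01 k : 0 <= ((W k)%:R : R) <= 1 by case: (W k); rewrite ?lexx ?ler01.
rewrite !mech_probE.
apply: le_trans (binom_dp b_ge1 b_lt_t (ltW p_gt0) p_lt1 W01 (t_param_le _ _ _) card_Y') _.
by rewrite lerD2l expR_1_sub_ln_four_div.
Qed.
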